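(* Let $(X,T),(Y,S)$ be $1$-step shifts of finite type over a finite alphabet $\mathcal{A}$, let $F:\mathcal{A}^2\to\mathbb{R}$ and $f(x,y)=F(x(0),y(0))$, and suppose $(X,T)$ is transitive. Then there is a constant $D_X\in\mathbb{N}$, depending on $(X,T)$ but not on $f$, such that for all integers $a\le b$, all $(v_1,v_2)\in P_{a,b}$ and all $y_0\in Y$, $$\min_{x\in X}\mathbb{S}_{[a,b]}f(x,y_0)\le H_{a,b,v_1,v_2}(y_0)\le\Big[\min_{x\in X}\mathbb{S}_{[a,b]}f(x,y_0)\Big]+4D_X\|f\|,$$ where $\|f\|$ is the supremum norm.
   Context: $\mathcal{A}^{\mathbb{Z}}$ carries the product of discrete topologies and the left shift $(Tx)(j)=x(j+1)$. A shift is a nonempty compact $X\subseteq\mathcal{A}^{\mathbb{Z}}$ with $TX=X$; it is a $1$-step shift of finite type if there is $\mathcal{F}\subseteq\mathcal{A}^{\{0,1\}}$ with $X=\{x:(T^jx)|_{[0,1]}\notin\mathcal{F}\ \forall j\}$. A shift $X$ is transitive if there is $D\in\mathbb{N}$ such that for all $x_1,x_2\in X$ and integers $b_1,a_2$ with $a_2-b_1\ge D$ there is $x'\in X$ with $x'(j)=x_1(j)$ for $j\le b_1$ and $x'(j)=x_2(j)$ for $j\ge a_2$. $\mathbb{S}_{[a,b]}f(x,y)=\sum_{j=a}^bf(T^jx,S^jy)$. $P_{a,b}=\{(v_1,v_2)\in\mathcal{A}^2:\exists x\in X,x(a)=v_1,x(b)=v_2\}$ and $H_{a,b,v_1,v_2}(y)=\min\{\mathbb{S}_{[a,b]}f(x,y):x\in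 X,x(a)=v_1,x(b)=v_2\}$. *)

From Stdlib Require Import Reals ZArith List.
Open Scope R_scope.

Definition finite_alphabet (A : Type) : Prop :=
  exists l : list A, forall a : A, In a l.

Definition config (A : Type) := Z -> A.

Definition shiftn {A : Type} (j : Z) (x : config A) : config A :=
  fun i => x (i + j)%Z.

(* Closedness in the product of discrete topologies. *)
Definition closed_sub {A : Type} (X : config A -> Prop) : Prop :=
  forall x : config A,
    (forall n : nat, exists z, X z /\
        forall i : Z, (Z.abs i <= Z.of_nat n)%Z -> z i = x i) -> X x.

(* A shift: nonempty, compact (= closed in the compact space A^Z), T X = X. *)
Definition is_shift {A : Type} (X : config A -> Prop) : Prop :=
  (exists x, X x) /\ closed_sub X /\
  (forall x, X x -> X (shiftn 1 x)) /\
  (forall x, X x -> exists z, X z /\ shiftn 1 z = x).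

Definition is_1step_SFT {A : Type} (X : config A -> Prop) : Prop :=
  is_shift X /\
  exists Fb : A -> A -> Prop,
    forall x, X x <-> (forall j : Z, ~ Fb (shiftn j x 0%Z) (shiftn j x 1%Z)).

Definition transitive_shift {A : Type} (X : config A -> Prop) : Prop :=
  exists D : nat, forall (x1 x2 : config A) (b1 a2 : Z),
    X x1 -> X x2 -> (a2 - b1 >= Z.of_nat D)%Z ->
    exists x', X x' /\ (forall j, (j <= b1)%Z -> x' j = x1 j)
                    /\ (forall j, (a2 <= j)%Z -> x' j = x2 j).

Definition Ssum {A : Type} (f : config A -> config A -> R) (a b : Z)
  (x y : config A) : R :=
  sum_f_R0 (fun k => f (shiftn (a + Z.of_nat k)%Z x) (shiftn (a + Z.of_nat k)%Z y))
           (Z.to_nat (b - a)).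

Definition pot {A : Type} (F : A -> A -> R) : config A -> config A -> R :=
  fun x y => F (x 0%Z) (y 0%Z).

Definition Pab {A : Type} (X : config A -> Prop) (a b : Z) (v1 v2 : A) : Prop :=
  exists x, X x /\ x a = v1 /\ x b = v2.

Definition is_min (P : R -> Prop) (m : R) : Prop :=
  P m /\ forall r, P r -> m <= r.

Definition Svals {A : Type} (X : config A -> Prop) (f : config A -> config A -> R)
  (a b : Z) (y0 : config A) : R -> Prop :=
  fun r => exists x, X x /\ r = Ssum f a b x y0.

(* Value set whose minimum is H_{a,b,v1,v2}(y0). *)
Definition Hvals {A : Type} (X : config A -> Prop) (f : config A -> config A -> R)
  (a b : Z) (v1 v2 : A) (y0 : config A) : R -> Prop :=
  fun r => exists x, X x /\ x a = v1 /\ x b = v2 /\ r = Ssum f a b x y0.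

Definition is_supnorm {A : Type} (X Y : config A -> Prop)
  (f : config A -> config A -> R) (nf : R) : Prop :=
  is_lub (fun r => exists x y, X x /\ Y y /\ r = Rabs (f x y)) nf.

(** Take a configuration [xm] minimising [S_[a,b] f(., y0)] over [X] and a
    configuration [w] with [w a = v1], [w b = v2]. Gluing [w] to [xm] and [xm]
    back to [w] with transitivity gives an admissible configuration for
    [H_{a,b,v1,v2}] that agrees with [xm] on [[a + D, b - D]], so its sum
    exceeds the minimum in at most [2 D] terms, each by at most [2 ||f||].
    Finiteness of the alphabet makes all the value sets involved finite, so
    the minima and the sup norm exist. *)

From Stdlib Require Import Reals ZArith List Lia Lra Classical.
Open Scope R_scope.

Lemma is_min_finite (L : list R) :
  forall P : R -> Prop,
    (exists r, P r) -> (forall r, P r -> In r L) -> exists m, is_min P m.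
Proof.
  induction L as [|c L IH]; intros P [r0 Pr0] PL.
  - destruct (PL r0 Pr0).
  - destruct (classic (exists r, P r /\ In r L)) as [PLne | PLe].
    + destruct (IH (fun r => P r /\ In r L) PLne (fun r H => proj2 H))
        as [m [[Pm _] m_min]].
      destruct (classic (P c /\ c < m)) as [[Pc lt_cm] | not_c].
      * exists c; split; [exact Pc|].
        intros r Pr; destruct (PL r Pr) as [<- | Lr]; [lra|].
        specialize (m_min r (conj Pr Lr)); lra.
      * exists m; split; [exact Pm|].
        intros r Pr; destruct (PL r Pr) as [<- | Lr].
        -- apply Rnot_lt_le; intro; apply not_c; auto.
        -- exact (m_min r (conj Pr Lr)).
    + assert (P_c : forall r, P r -> r = c).
      { intros r Pr; destruct (PL r Pr) as [-> | Lr]; [reflexivity|].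
        exfalso; apply PLe; eauto. }
      exists c; split.
      * rewrite <- (P_c r0 Pr0); exact Pr0.
      * intros r Pr; rewrite (P_c r Pr); lra.
Qed.

Lemma is_lub_finite (L : list R) (P : R -> Prop) :
  (exists r, P r) -> (forall r, P r -> In r L) -> exists M, is_lub P M.
Proof.
  intros [r0 Pr0] PL.
  destruct (is_min_finite (map Ropp L) (fun r => P (- r))) as [m [Pm m_min]].
  - exists (- r0); rewrite Ropp_involutive; exact Pr0.
  - intros r Pr; rewrite <- (Ropp_involutive r); apply in_map; auto.
  - exists (- m); split.
    + intros r Pr.
      assert (m <= - r) by (apply m_min; rewrite Ropp_involutive; exact Pr).
      lra.
    + intros u u_ub; exact (u_ub _ Pm).
Qed.

Lemma sum_f_R0_finite_values {A : Type} (l : list A) (l_full : forall v, In v l)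
  (g : nat -> A -> R) (n : nat) :
  exists L, forall c : nat -> A, In (sum_f_R0 (fun k => g k (c k)) n) L.
Proof.
  induction n as [|n [L HL]].
  - exists (map (g 0%nat) l); intro c; simpl; apply in_map; auto.
  - exists (flat_map (fun s => map (fun v => s + g (S n) v) l) L).
    intro c; apply in_flat_map.
    exists (sum_f_R0 (fun k => g k (c k)) n); split; [apply HL|].
    apply (in_map (fun v => _ + g (S n) v)); auto.
Qed.

Lemma sum_f_R0_indicator_lt (c : R) (D n : nat) :
  sum_f_R0 (fun k => if (k <? D)%nat then c else 0) n = c * INR (Nat.min (S n) D).
Proof.
  induction n as [|n IHn]; simpl sum_f_R0.
  - destruct (Nat.ltb_spec 0 D).
    + replace (Nat.min 1 D) with 1%nat by lia; simpl; ring.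
    + replace (Nat.min 1 D) with 0%nat by lia; simpl; ring.
  - rewrite IHn; destruct (Nat.ltb_spec (S n) D).
    + replace (Nat.min (S (S n)) D) with (S (S n)) by lia.
      replace (Nat.min (S n) D) with (S n) by lia.
      rewrite (S_INR (S n)); ring.
    + replace (Nat.min (S (S n)) D) with (Nat.min (S n) D) by lia; ring.
Qed.

Lemma sum_f_R0_indicator_gt (c : R) (m n : nat) :
  sum_f_R0 (fun k => if (m <? k)%nat then c else 0) n = c * INR (n - m).
Proof.
  induction n as [|n IHn]; simpl sum_f_R0.
  - destruct (Nat.ltb_spec m 0); [lia|]; simpl; ring.
  - rewrite IHn; destruct (Nat.ltb_spec m (S n)).
    + replace (S n - m)%nat with (S (n - m)) by lia; rewrite S_INR; ring.
    + replace (S n - m)%nat with 0%nat by lia.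
      replace (n - m)%nat with 0%nat by lia; simpl; ring.
Qed.

Lemma sum_f_R0_le_off_middle (f g : nat -> R) (c : R) (D n : nat) :
  0 <= c ->
  (forall k, (k <= n)%nat -> f k <= g k + c) ->
  (forall k, (D <= k)%nat -> (k + D <= n)%nat -> f k = g k) ->
  sum_f_R0 f n <= sum_f_R0 g n + 2 * INR D * c.
Proof.
  intros c_ge0 f_le f_mid.
  apply Rle_trans with (sum_f_R0 (fun k => g k +
    ((if (k <? D)%nat then c else 0) + (if (n - D <? k)%nat then c else 0))) n).
  - apply sum_Rle; intros k k_le.
    destruct (Nat.ltb_spec k D), (Nat.ltb_spec (n - D) k);
      try (specialize (f_le k k_le); lra).
    rewrite (f_mid k) by lia; lra.
  - rewrite !sum_plus, sum_f_R0_indicator_lt, sum_f_R0_indicator_gt.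
    assert (INR (Nat.min (S n) D) <= INR D) by (apply le_INR; lia).
    assert (INR (n - (n - D)) <= INR D) by (apply le_INR; lia).
    nra.
Qed.

Lemma SFT_shiftn {A : Type} (X : config A -> Prop) (x : config A) (j : Z) :
  is_1step_SFT X -> X x -> X (shiftn j x).
Proof.
  intros [_ [Fb X_Fb]] Xx; apply X_Fb; intro i.
  pose proof (proj1 (X_Fb x) Xx (i + j)%Z) as H.
  unfold shiftn in *; rewrite !Z.add_assoc in H; exact H.
Qed.

Section OneStepShifts.

Variable A : Type.
Variables X Y : config A -> Prop.
Hypothesis X_SFT : is_1step_SFT X.
Hypothesis Y_SFT : is_1step_SFT Y.

Lemma Ssum_pot (F : A -> A -> R) (a b : Z) (x y : config A) :
  Ssum (pot F) a b x y =
  sum_f_R0 (fun k => F (x (a + Z.of_nat k)%Z) (y (a + Z.of_nat k)%Z)) (Z.to_nat (b - a)).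
Proof. reflexivity. Qed.

Lemma Svals_finite (F : A -> A -> R) (a b : Z) (y : config A) :
  finite_alphabet A -> exists L, forall r, Svals X (pot F) a b y r -> In r L.
Proof.
  intros [l l_full].
  destruct (sum_f_R0_finite_values l l_full
              (fun k v => F v (y (a + Z.of_nat k)%Z)) (Z.to_nat (b - a))) as [L HL].
  exists L; intros r [x [_ ->]].
  exact (HL (fun k => x (a + Z.of_nat k)%Z)).
Qed.

Lemma Hvals_Svals (f : config A -> config A -> R) a b v1 v2 y r :
  Hvals X f a b v1 v2 y r -> Svals X f a b y r.
Proof. intros [x [Xx [_ [_ ->]]]]; exists x; auto. Qed.

Lemma supnorm_pot_exists (F : A -> A -> R) (x y : config A) :
  finite_alphabet A -> X x -> Y y -> exists nf, is_supnorm X Y (pot F) nf.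
Proof.
  intros [l l_full] Xx Yy.
  apply (is_lub_finite (flat_map (fun u => map (fun v => Rabs (F u v)) l) l)).
  - exists (Rabs (pot F x y)), x, y; auto.
  - intros r [x' [y' [_ [_ ->]]]]; apply in_flat_map.
    exists (x' 0%Z); split; [auto|].
    apply (in_map (fun v => Rabs (F (x' 0%Z) v))); auto.
Qed.

Lemma supnorm_pot_bound (F : A -> A -> R) (nf : R) (x y : config A) (j : Z) :
  is_supnorm X Y (pot F) nf -> X x -> Y y -> Rabs (F (x j) (y j)) <= nf.
Proof.
  intros [nf_ub _] Xx Yy; apply nf_ub.
  exists (shiftn j x), (shiftn j y).
  split; [apply SFT_shiftn; auto|]; split; [apply SFT_shiftn; auto|]; reflexivity.
Qed.

Lemma Ssum_pot_le_of_agree (F : A -> A -> R) (nf : R) (D : nat) (a b : Z)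
  (x x' y : config A) :
  is_supnorm X Y (pot F) nf -> X x -> X x' -> Y y -> (a <= b)%Z ->
  (forall j, (a + Z.of_nat D <= j <= b - Z.of_nat D)%Z -> x' j = x j) ->
  Ssum (pot F) a b x' y <= Ssum (pot F) a b x y + 4 * INR D * nf.
Proof.
  intros nf_sup Xx Xx' Yy le_ab agree.
  assert (bound : forall z j, X z -> Rabs (F (z j) (y j)) <= nf)
    by (intros; apply supnorm_pot_bound; auto).
  rewrite !Ssum_pot; replace (4 * INR D * nf) with (2 * INR D * (2 * nf)) by ring.
  apply sum_f_R0_le_off_middle.
  - pose proof (bound x 0%Z Xx); pose proof (Rabs_pos (F (x 0%Z) (y 0%Z))); lra.
  - intros k _; set (j := (a + Z.of_nat k)%Z).
    pose proof (bound x' j Xx'); pose proof (bound x j Xx).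
    pose proof (Rle_abs (F (x' j) (y j))).
    pose proof (Rle_abs (- F (x j) (y j))) as neg_le; rewrite Rabs_Ropp in neg_le.
    lra.
  - intros k k_ge k_le; rewrite agree by lia; reflexivity.
Qed.

Section Splice.

Variable D : nat.
Hypothesis X_glue : forall (x1 x2 : config A) (b1 a2 : Z),
  X x1 -> X x2 -> (a2 - b1 >= Z.of_nat D)%Z ->
  exists x', X x' /\ (forall j, (j <= b1)%Z -> x' j = x1 j)
                  /\ (forall j, (a2 <= j)%Z -> x' j = x2 j).

Lemma glue_inside (a b : Z) (w x : config A) :
  X w -> X x ->
  exists x', X x' /\ x' a = w a /\ x' b = w b /\
    forall j, (a + Z.of_nat D <= j <= b - Z.of_nat D)%Z -> x' j = x j.
Proof.
  intros Xw Xx.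
  destruct (Z_lt_le_dec (b - a) (Z.of_nat D)) as [short | long].
  - exists w; repeat split; auto; intros j; lia.
  - destruct (X_glue w x a (a + Z.of_nat D)%Z Xw Xx ltac:(lia))
      as [x1 [Xx1 [x1_left x1_right]]].
    destruct (X_glue x1 w (b - Z.of_nat D)%Z b Xx1 Xw ltac:(lia))
      as [x2 [Xx2 [x2_left x2_right]]].
    exists x2; split; [exact Xx2|]; split; [|split].
    + rewrite x2_left, x1_left by lia; reflexivity.
    + apply x2_right; lia.
    + intros j Hj; rewrite x2_left, x1_right by lia; reflexivity.
Qed.

End Splice.

End OneStepShifts.

Theorem lemma3p8 (A : Type) (X Y : config A -> Prop) :
  finite_alphabet A -> is_1step_SFT X -> is_1step_SFT Y -> transitive_shift X ->
  exists DX : nat,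
    forall (F : A -> A -> R) (a b : Z) (v1 v2 : A) (y0 : config A),
      (a <= b)%Z -> Pab X a b v1 v2 -> Y y0 ->
      exists m h nf : R,
        is_min (Svals X (pot F) a b y0) m /\
        is_min (Hvals X (pot F) a b v1 v2 y0) h /\
        is_supnorm X Y (pot F) nf /\
        m <= h <= m + 4 * INR DX * nf.
Proof.
  intros finA X_SFT Y_SFT [D X_glue]; exists D.
  intros F a b v1 v2 y0 le_ab [w [Xw [<- <-]]] Yy0.
  destruct (supnorm_pot_exists A X Y F w y0 finA Xw Yy0) as [nf nf_sup].
  destruct (Svals_finite A X F a b y0 finA) as [L L_Svals].
  destruct (is_min_finite L (Svals X (pot F) a b y0)) as [m [[xm [Xxm ->]] m_min]].
  { exists (Ssum (pot F) a b w y0), w; auto. }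
  { exact L_Svals. }
  destruct (is_min_finite L (Hvals X (pot F) a b (w a) (w b) y0)) as [h [Hh h_min]].
  { exists (Ssum (pot F) a b w y0), w; auto. }
  { intros r Hr; apply L_Svals, (Hvals_Svals A X _ _ _ _ _ _ _ Hr). }
  destruct (glue_inside A X D X_glue a b w xm Xw Xxm)
    as [x' [Xx' [x'_a [x'_b agree]]]].
  exists (Ssum (pot F) a b xm y0), h, nf.
  split; [split; [exists xm; auto | exact m_min]|].
  split; [split; [exact Hh | exact h_min]|].
  split; [exact nf_sup | split].
  - apply m_min, (Hvals_Svals A X _ _ _ _ _ _ _ Hh).
  - apply Rle_trans with (Ssum (pot F) a b x' y0).
    + apply h_min; exists x'; auto.
    + apply (Ssum_pot_le_of_agree A X Y X_SFT Y_SFT); auto.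
Qed.
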